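(* Both forgetfulness and absent-mindedness can prevent the existence of a Nash equilibrium in behavioural policies. Precisely: (i) there exists a (generalised) MAID in which some agent is forgetful and no agent is absent-minded, and which has no Nash equilibrium in behavioural policies; (ii) there exists a (generalised) MAID in which some agent is absent-minded and no agent is forgetful, and which has no Nash equilibrium in behavioural policies.
   Context: A multi-agent influence diagram (MAID) consists of a finite set of agents $N=\{1,\dots,n\}$ and a directed acyclic graph (DAG) on a finite set of variables $\bm{V}$, partitioned into chance variables $\bm{X}$, decision variables $\bm{D}=\bigcup_{i\in N}\bm{D}^i$ and utility variables $\bm{U}=\bigcup_{i\in N}\bm{U}^i$ (the sets $\bm{D}^i$ are pairwise disjoint, as are the $\bm{U}^i$). Each variable $V$ has a finite domain $\mathrm{dom}(V)$ with at least two elements; $\mathrm{Pa}_V$ denotes its parents in the DAG and $\mathrm{pa}_V$ an instantiation of them. The MAID specifies for every non-decision variable $V$ a conditional probability distribution (CPD) $\Pr(V\mid \mathrm{Pa}_V)$; utility variables have deterministic CPDs, i.e. are real-valued functions of their parents. In a generalised MAID, each agent's decision set $\bm{D}^i$ is partitioned into groups; all decisions in one group have the same domain and their parent sets have the same joint domain, and they share one decision rule. A decision rule for a group $G$ is a CPD $\pi_G(D\mid \mathrm{Pa}_D)$ used at every $D\in G$, each such decision drawing independently from it; it is pure if all its probabilities are in $\{0,1\}$. A (behavioural) policy $\bm{\pi}^i$ of agent $i$ assigns a decision rule to each group of $\bm{D}^i$; a policy profile is $\bm{\pi}=(\bm{\pi}^1,\dots,\bm{\pi}^n)$ and $\bm{\pi}^{-i}$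 denotes the policies of the agents other than $i$. The profile induces the joint distribution $\Pr^{\bm\pi}(\bm v)=\prod_{V\in\bm V\setminus\bm D}\Pr(v\mid \mathrm{pa}_V)\prod_{D\in\bm D}\pi_{G(D)}(d\mid \mathrm{pa}_D)$, where $G(D)$ is the group of $D$, and agent $i$'s expected utility is $EU^i(\bm\pi)=\sum_{U\in\bm U^i}\sum_{u}\Pr^{\bm\pi}(U=u)\,u$. A profile $\bm\pi$ is a Nash equilibrium in behavioural policies if for every agent $i$ and every behavioural policy $\bm\varpi^i$, $EU^i(\bm\pi^{-i},\bm\pi^i)\ge EU^i(\bm\pi^{-i},\bm\varpi^i)$. Agent $i$ has imperfect recall if for every total ordering $D_1\prec\dots\prec D_m$ of $\bm D^i$ there are $j<k$ with $\mathrm{Pa}_{D_j}\cup\{D_j\}\not\subseteq \mathrm{Pa}_{D_k}$; agent $i$ is forgetful if such a pair $D_j,D_k$ have distinct decision rules (lie in different groups); agent $i$ is absent-minded if some group of its decisions contains more than one decision. *)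

From HB Require Import structures.
From mathcomp Require Import all_boot all_order all_algebra.
From mathcomp Require Import Rstruct.
From Stdlib Require Rdefinitions.
Notation R := Rdefinitions.R.
Set Implicit Arguments.
Unset Strict Implicit.
Unset Printing Implicit Defensive.
Import Order.TTheory GRing.Theory Num.Theory.
Local Open Scope ring_scope.

Inductive vkind (n : nat) : Type :=
| Chance
| Decision of 'I_n
| Utility of 'I_n.
Arguments Chance {n}.

(* A generalised MAID.
   - agents: 'I_nA;  variables: the finite type V;  DAG given by parent sets par;
   - dom v = 'I_(k v);  full instantiations of V are Asg = {dffun forall v, 'I_(k v)};
   - decision groups are indexed by 'I_ng; group G belongs to agent gag G, its decisions
     have domain 'I_(dk G), and the (common) joint domain of their parents is identified
     with 'I_(ok G) through the bijections obs v (v a decision of G);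
   - cpd v x d = Pr(V = d | pa_V), where pa_V is the restriction of x to par v;
   - for a utility variable U, its domain (a finite set of reals) is the image of the
     injective labelling uval U. *)
Record MAID := {
  nA : nat;
  V : finType;
  par : V -> {set V};
  kind : V -> vkind nA;
  k : V -> nat;
  ng : nat;
  grp : V -> 'I_ng;
  gag : 'I_ng -> 'I_nA;
  dk : 'I_ng -> nat;
  ok : 'I_ng -> nat;
  obs : forall v : V, {dffun forall u : V, 'I_(k u)} -> 'I_(ok (grp v));
  cpd : forall v : V, {dffun forall u : V, 'I_(k u)} -> 'I_(k v) -> R;
  uval : forall v : V, 'I_(k v) -> R
}.

Arguments obs {m} v x.
Arguments cpd {m} v x d.
Arguments uval {m} v d.

Definition Asg (M : MAID) := {dffun forall u : V M, 'I_(k u)}.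

Definition isDec (M : MAID) (i : 'I_(nA M)) (v : V M) : bool :=
  if kind v is Decision j then j == i else false.
Definition isDecAny (M : MAID) (v : V M) : bool :=
  if kind v is Decision _ then true else false.
Definition isUtil (M : MAID) (i : 'I_(nA M)) (v : V M) : bool :=
  if kind v is Utility j then j == i else false.

Definition edge (M : MAID) : rel (V M) := fun a b => a \in par b.

Definition agree_par (M : MAID) (v : V M) (x y : Asg M) : Prop :=
  forall u, u \in par v -> x u = y u.

Definition wf_MAID (M : MAID) : Prop :=
  (* the graph is acyclic: no edge u -> v closes a path v ~> u *)
  (forall u v : V M, u \in par v -> ~~ connect (@edge M) v u) /\
  (forall v : V M, (2 <= k v)%N) /\
  (forall v : V M, ~~ isDecAny v ->
     (forall x y, agree_par v x y -> cpd v x = cpd v y) /\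
     (forall x d, 0 <= cpd v x d) /\
     (forall x, \sum_(d : 'I_(k v)) cpd v x d = 1)) /\
  (forall v : V M, (if kind v is Utility _ then true else false) ->
     (forall x d, cpd v x d = 0 \/ cpd v x d = 1) /\ injective (uval v)) /\
  (forall G : 'I_(ng M), exists v, isDecAny v /\ grp v = G) /\
  (forall v : V M, forall i, isDec i v ->
     gag (grp v) = i /\ k v = dk (grp v) /\
     (forall x y, agree_par v x y -> obs v x = obs v y) /\
     (forall x y, obs v x = obs v y -> agree_par v x y) /\
     (forall o, exists x, obs v x = o)).

Definition profile (M : MAID) :=
  forall G : 'I_(ng M), 'I_(ok G) -> 'I_(dk G) -> R.

Definition valid_rule (M : MAID) (G : 'I_(ng M)) (r : 'I_(ok G) -> 'I_(dk G) -> R) :=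
  (forall o d, 0 <= r o d) /\ (forall o, \sum_(d : 'I_(dk G)) r o d = 1).

Definition valid_policy (M : MAID) (i : 'I_(nA M)) (pi : profile M) : Prop :=
  forall G : 'I_(ng M), gag G = i -> valid_rule (pi G).

Definition valid_profile (M : MAID) (pi : profile M) : Prop :=
  forall G : 'I_(ng M), valid_rule (pi G).

Definition dec_prob (M : MAID) (pi : profile M) (v : V M) (x : Asg M) : R :=
  match (insub (nat_of_ord (x v)) : option 'I_(dk (grp v))) with
  | Some d => pi (grp v) (obs v x) d
  | None => 0
  end.

Definition factor (M : MAID) (pi : profile M) (v : V M) (x : Asg M) : R :=
  if isDecAny v then dec_prob pi v x else cpd v x (x v).

Definition joint (M : MAID) (pi : profile M) (x : Asg M) : R :=
  \prod_(v : V M) factor pi v x.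

Definition EU (M : MAID) (i : 'I_(nA M)) (pi : profile M) : R :=
  \sum_(U : V M | isUtil i U) \sum_(u : 'I_(k U))
     (\sum_(x : Asg M | x U == u) joint pi x) * uval U u.

Definition deviate (M : MAID) (pi : profile M) (i : 'I_(nA M)) (varpi : profile M)
  : profile M :=
  fun G => if gag G == i then varpi G else pi G.

Definition nash (M : MAID) (pi : profile M) : Prop :=
  valid_profile pi /\
  forall (i : 'I_(nA M)) (varpi : profile M), valid_policy i varpi ->
    EU i (deviate pi i varpi) <= EU i pi.

(* total orderings of D^i: duplicate-free enumerations of D^i *)
Definition ordering_of (M : MAID) (i : 'I_(nA M)) (s : seq (V M)) : Prop :=
  uniq s /\ forall v, (v \in s) = isDec i v.

Definition imperfect_recall (M : MAID) (i : 'I_(nA M)) : Prop :=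
  forall s, ordering_of i s ->
    exists a b, [/\ a \in s, b \in s, (index a s < index b s)%N &
                    ~~ ((a |: par a) \subset par b)].

Definition forgetful (M : MAID) (i : 'I_(nA M)) : Prop :=
  forall s, ordering_of i s ->
    exists a b, [/\ a \in s, b \in s, (index a s < index b s)%N,
                    ~~ ((a |: par a) \subset par b) & grp a != grp b].

Definition absent_minded (M : MAID) (i : 'I_(nA M)) : Prop :=
  exists v w, [/\ isDec i v, isDec i w, v != w & grp v = grp w].

(* Both examples are a team version of matching pennies.  Agent [team] chooses two
   bits, agent [rival] one bit; [team] wins iff the three bits agree, otherwise
   [rival] wins.  Team's two decisions are parentless, so neither observes the
   other; they use distinct decision rules in the first example (forgetfulness)
   and a single shared rule in the second (absent-mindedness).
   Let a, b, c be the probabilities that the three decisions choose 1 in an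
   equilibrium and w the team's payoff.  Team's pure deviations (both bits 1,
   both bits 0) give c <= w and 1 - c <= w, so w >= 1/2; by zero-sum, the
   rival's pure deviations give w <= a b and w <= (1 - a)(1 - b).  But
   a b (1 - a)(1 - b) <= 1/16 < 1/4. *)

From mathcomp Require Import all_boot all_order all_algebra.
From mathcomp Require Import Rstruct.
From mathcomp Require Import ring lra.

Set Implicit Arguments.
Unset Strict Implicit.
Unset Printing Implicit Defensive.
Import Order.TTheory GRing.Theory Num.Theory.
Local Open Scope ring_scope.

Lemma compl_prod_le (F : realFieldType) (a b : F) : 0 <= a <= 1 -> 0 <= b <= 1 ->
  a * b * ((1 - a) * (1 - b)) <= 1 / 16.
Proof.
move=> /andP [a0 a1] /andP [b0 b1].
have var_le (p : F) : p * (1 - p) <= 1 / 4.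
  have := sqr_ge0 (p - 1 / 2); lra.
have -> : a * b * ((1 - a) * (1 - b)) = (a * (1 - a)) * (b * (1 - b)) by ring.
have -> : 1 / 16 = 1 / 4 * (1 / 4) :> F by field.
by apply: ler_pM; rewrite ?var_le ?mulr_ge0 ?subr_ge0.
Qed.

Lemma pennies_bounds_absurd (F : realFieldType) (a b c w : F) :
  0 <= a <= 1 -> 0 <= b <= 1 ->
  c <= w -> 1 - c <= w -> w <= a * b -> w <= (1 - a) * (1 - b) -> False.
Proof.
move=> a01 b01 cw cw' wab wab'.
have w_half : 1 / 2 <= w by lra.
have : w * w <= a * b * ((1 - a) * (1 - b)) by apply: ler_pM; lra.
have := compl_prod_le a01 b01; nra.
Qed.

Section GeneralMAID.
Variable M : MAID.

Lemma acyclic_of_rank (rank : V M -> nat) :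
  (forall u v, u \in par v -> (rank u < rank v)%N) ->
  forall u v, u \in par v -> ~~ connect (@edge M) v u.
Proof.
move=> rank_par u v uv; apply/negP => /connectP [p vp u_last].
have rank_path w q : path (@edge M) w q -> (rank w <= rank (last w q))%N.
  elim: q w => //= y q IHq w /andP [wy /IHq]; exact/leq_trans/ltnW/rank_par.
by have := leq_trans (rank_par _ _ uv) (rank_path _ _ vp); rewrite -u_last ltnn.
Qed.

Lemma forgetful_of_unrelated (i : 'I_(nA M)) (a b : V M) :
  isDec i a -> isDec i b -> a \notin par b -> b \notin par a -> grp a != grp b ->
  forgetful i.
Proof.
have not_sub (x y : V M) : x \notin par y -> ~~ ((x |: par x) \subset par y).
  by apply: contra => /subsetP; apply; rewrite setU11.
move=> ai bi a_b b_a gab s [_ s_dec].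
have [a_s b_s] : a \in s /\ b \in s by rewrite !s_dec.
have : index a s != index b s.
  by apply: contraNneq gab => /(index_inj a a_s b_s) ->.
case: ltngtP => // [ab|ba] _.
- by exists a, b; split; rewrite ?not_sub.
- by exists b, a; split; rewrite 1?eq_sym ?not_sub.
Qed.

Lemma not_forgetful_of_one_group (i : 'I_(nA M)) :
  (forall v w, isDec i v -> isDec i w -> grp v = grp w) -> ~ forgetful i.
Proof.
move=> one_grp /(_ (enum (isDec i))) [].
  by split=> [|v]; rewrite ?enum_uniq ?mem_enum.
move=> a [b [+ + _ _]]; rewrite !mem_enum => ai bi.
by rewrite (one_grp a b ai bi) eqxx.
Qed.

Lemma not_absent_minded_of_grp_inj (i : 'I_(nA M)) :
  (forall v w, isDec i v -> isDec i w -> grp v = grp w -> v = w) ->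
  ~ absent_minded i.
Proof.
by move=> grp_inj [v [w [vi wi /[swap] /(grp_inj v w vi wi) ->]]]; rewrite eqxx.
Qed.

Lemma valid_deviate (pi varpi : profile M) (i : 'I_(nA M)) :
  valid_profile pi -> valid_policy i varpi -> valid_profile (deviate pi i varpi).
Proof. by move=> pi_ok varpi_ok G; rewrite /deviate; case: eqP => [/varpi_ok|_]. Qed.

Lemma EU_expectation (i : 'I_(nA M)) (pi : profile M) :
  EU i pi = \sum_(U | isUtil i U) \sum_(x : Asg M) joint pi x * uval U (x U).
Proof.
apply: eq_bigr => U _; rewrite (partition_big (fun x : Asg M => x U) predT) //=.
apply: eq_bigr => u _; rewrite big_distrl /=.
by apply: eq_bigr => x /eqP ->.
Qed.

End GeneralMAID.

Definition team : 'I_2 := ord0.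
Definition rival : 'I_2 := ord_max.

Definition team_dec1 : 'I_5 := @Ordinal 5 0 isT.
Definition team_dec2 : 'I_5 := @Ordinal 5 1 isT.
Definition rival_dec : 'I_5 := @Ordinal 5 2 isT.
Definition team_util : 'I_5 := @Ordinal 5 3 isT.
Definition rival_util : 'I_5 := @Ordinal 5 4 isT.

Lemma ord2P (d : 'I_2) : d = ord0 \/ d = ord_max.
Proof. by case: d => -[|[|]] // d2; [left | right]; apply: val_inj. Qed.

Lemma ord5P (v : 'I_5) :
  v = team_dec1 \/ v = team_dec2 \/ v = rival_dec \/ v = team_util \/ v = rival_util.
Proof.
by case: v => -[|[|[|[|[|]]]]] // v5;
  [left | right; left | do 2 right; left | do 3 right; left | do 4 right];
  apply: val_inj.
Qed.

Lemma sum_ord2 (F : 'I_2 -> R) : \sum_(d < 2) F d = F ord0 + F ord_max.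
Proof. by rewrite big_ord_recr big_ord1; congr (F _ + _); apply: val_inj. Qed.

Lemma prod_ord5 (F : 'I_5 -> R) : \prod_(v < 5) F v =
  F team_dec1 * F team_dec2 * F rival_dec * F team_util * F rival_util.
Proof.
rewrite !big_ord_recl big_ord0 mulr1 !mulrA.
by congr (F _ * F _ * F _ * F _ * F _); apply: val_inj.
Qed.

Definition pennies_par (v : 'I_5) : {set 'I_5} :=
  if (2 < v)%N then [set team_dec1; team_dec2; rival_dec] else set0.

Definition pennies_kind (v : 'I_5) : vkind 2 :=
  match val v with
  | 0 | 1 => Decision team
  | 2 => Decision rival
  | 3 => Utility team
  | _ => Utility rival
  end.

Definition team_wins (a b c : 'I_2) : bool := (a == b) && (b == c).

Definition wins (i a b c : 'I_2) : bool :=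
  if i == team then team_wins a b c else ~~ team_wins a b c.

Definition pennies_cpd (v : 'I_5) (x : {dffun forall v : 'I_5, 'I_2}) (d : 'I_2) : R :=
  (val d == wins (if v == team_util then team else rival)
                 (x team_dec1) (x team_dec2) (x rival_dec))%:R.

(* A decision has no parents, so it observes the single point of ['I_1] and its
   decision rule is one distribution on ['I_2]; utility nodes take value 1 when
   their agent wins. *)
Definition pennies (n : nat) (grp : 'I_5 -> 'I_n) (owner : 'I_n -> 'I_2) : MAID :=
  {| nA := 2; V := 'I_5; par := pennies_par; kind := pennies_kind; k := fun=> 2%N;
     ng := n; grp := grp; gag := owner; dk := fun=> 2%N; ok := fun=> 1%N;
     obs := fun _ _ => ord0; cpd := pennies_cpd; uval := fun _ d => (val d)%:R |}.

Section TeamPennies.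
Variables (n : nat) (grp : 'I_5 -> 'I_n) (owner : 'I_n -> 'I_2).
Let M := pennies grp owner.

Definition pure (d : 'I_2) : profile M := fun _ _ e => (e == d)%:R.
Arguments pure : clear implicits.

Definition rule (pi : profile M) (v : 'I_5) : 'I_2 -> R := pi (grp v) ord0.

Definition asg5 (a b c d e : 'I_2) : Asg M :=
  [ffun v : 'I_5 => nth ord0 [:: a; b; c; d; e] v].

Lemma sum_asg (F : Asg M -> R) : \sum_(x : Asg M) F x =
  \sum_(a < 2) \sum_(b < 2) \sum_(c < 2) \sum_(d < 2) \sum_(e < 2) F (asg5 a b c d e).
Proof.
rewrite !pair_bigA.
pose h (p : 'I_2 * 'I_2 * 'I_2 * 'I_2 * 'I_2) := asg5 p.1.1.1.1 p.1.1.1.2 p.1.1.2 p.1.2 p.2.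
rewrite (reindex h) /=; first by apply: eq_bigr => -[[[[a b] c] d] e].
exists (fun x : Asg M => (x team_dec1, x team_dec2, x rival_dec, x team_util, x rival_util)).
  by move=> [[[[a b] c] d] e] _; rewrite /h /asg5 !ffunE.
move=> x _; apply/ffunP => v; rewrite /h /asg5 ffunE.
by case: (ord5P v) => [|[|[|[|]]]] ->.
Qed.

Lemma joint_pennies (pi : profile M) (x : Asg M) : joint pi x =
  rule pi team_dec1 (x team_dec1) * rule pi team_dec2 (x team_dec2) *
  rule pi rival_dec (x rival_dec) *
  pennies_cpd team_util x (x team_util) * pennies_cpd rival_util x (x rival_util).
Proof.
by rewrite /joint prod_ord5 /factor /dec_prob /= !valK.
Qed.

Lemma EU_pennies (i : 'I_2) (pi : profile M) : EU (M := M) i pi =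
  \sum_(a < 2) \sum_(b < 2) \sum_(c < 2)
    rule pi team_dec1 a * rule pi team_dec2 b * rule pi rival_dec c * (wins i a b c)%:R.
Proof.
rewrite EU_expectation (big_pred1 (if i == team then team_util else rival_util)); last first.
  by move=> U; case: (ord5P U) => [|[|[|[|]]]] ->; case: (ord2P i) => ->.
rewrite sum_asg; apply: eq_bigr => a _; apply: eq_bigr => b _; apply: eq_bigr => c _.
rewrite !sum_ord2 !joint_pennies /pennies_cpd /asg5 !ffunE /=.
by case: (ord2P i) => ->; rewrite /wins /=; case: (team_wins a b c) => /=; ring.
Qed.

Lemma rule_compl (pi : profile M) (v : 'I_5) : valid_profile pi ->
  0 <= rule pi v ord_max <= 1 /\ rule pi v ord0 = 1 - rule pi v ord_max.
Proof.
move=> /(_ (grp v)) [ge0 /(_ ord0)]; rewrite sum_ord2 => sum1.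
have := ge0 ord0 ord0; have := ge0 ord0 ord_max; rewrite /rule; lra.
Qed.

Lemma EU_rival (pi : profile M) :
  valid_profile pi -> EU (M := M) rival pi = 1 - EU (M := M) team pi.
Proof.
move=> pi_ok; rewrite !EU_pennies !sum_ord2 /wins /team_wins /=.
have [_ ->] := rule_compl team_dec1 pi_ok.
have [_ ->] := rule_compl team_dec2 pi_ok.
have [_ ->] := rule_compl rival_dec pi_ok.
ring.
Qed.

Lemma valid_pure (i : 'I_(nA M)) (d : 'I_2) : valid_policy i (pure d).
Proof.
move=> G _; split=> [o e|o]; first by rewrite /pure ler0n.
by rewrite sum_ord2 /pure; case: (ord2P d) => -> /=; rewrite ?addr0 ?add0r.
Qed.

Hypothesis grp_onto : forall G : 'I_n, exists2 v : 'I_5, (v < 3)%N & grp v = G.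
Hypothesis owner_grp : [/\ owner (grp team_dec1) = team,
  owner (grp team_dec2) = team & owner (grp rival_dec) = rival].

Lemma EU_team_deviate_team (pi : profile M) (d : 'I_2) :
  EU (M := M) team (deviate pi team (pure d)) = rule pi rival_dec d.
Proof.
have [own1 own2 own3] := owner_grp.
rewrite EU_pennies /rule /deviate /= own1 own2 own3 /pure !sum_ord2 /wins /team_wins /=.
by case: (ord2P d) => -> /=; ring.
Qed.

Lemma EU_team_deviate_rival (pi : profile M) (d : 'I_2) :
  EU (M := M) team (deviate pi rival (pure d)) = rule pi team_dec1 d * rule pi team_dec2 d.
Proof.
have [own1 own2 own3] := owner_grp.
rewrite EU_pennies /rule /deviate /= own1 own2 own3 /pure !sum_ord2 /wins /team_wins /=.
by case: (ord2P d) => -> /=; ring.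
Qed.

Lemma pennies_wf : wf_MAID M.
Proof.
have nondec_util (v : 'I_5) : ~~ isDecAny (M := M) v -> (2 < v)%N.
  by case: (ord5P v) => [|[|[|[|]]]] ->.
have par_util u v : u \in pennies_par v -> (u < 3 <= v)%N.
  rewrite /pennies_par; case: ifP => [v_util|]; rewrite !inE //.
  by move=> /orP [/orP [] | ] /eqP ->.
split.
  apply: (@acyclic_of_rank M val) => u v uv.
  by have /andP [u3 v3] := par_util u v uv; apply: leq_trans v3.
split=> //.
split.
  move=> v /nondec_util v_util; split.
    by move=> x y xy /=; rewrite /pennies_cpd !xy //= /pennies_par v_util !inE eqxx ?orbT.
  split=> [x d|x]; first exact: ler0n.
  by rewrite /= sum_ord2 /pennies_cpd; case: wins; rewrite ?addr0 ?add0r.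
split.
  move=> v _; split=> [x d|d e /eqP]; first by rewrite /= /pennies_cpd; case: (_ == _); auto.
  by rewrite /= eqr_nat => /eqP /val_inj.
split.
  move=> G; have [v v3 <-] := grp_onto G; exists v.
  by split; case: (ord5P v) v3 => [|[|[|[|]]]] ->.
move=> v i v_dec.
have [v_par owner_v] : pennies_par v = set0 /\ owner (grp v) = i.
  by have [] := owner_grp; case: (ord5P v) v_dec => [|[|[|[|]]]] -> // /eqP <-.
split=> //; split=> //; split=> //; split=> [x y _ u|o]; first by rewrite /= v_par inE.
by exists [ffun=> ord0]; rewrite [o]ord1.
Qed.

Lemma pennies_no_nash : ~ exists pi : profile M, nash pi.
Proof.
case=> pi [pi_ok pi_stable]; set w := EU (M := M) team pi.
have team_best d : rule pi rival_dec d <= w.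
  by rewrite -(EU_team_deviate_team pi d); apply: pi_stable; apply: valid_pure.
have rival_best d : w <= rule pi team_dec1 d * rule pi team_dec2 d.
  have := pi_stable rival (pure d) (@valid_pure rival d).
  have dev_ok := valid_deviate pi_ok (@valid_pure rival d).
  by rewrite !EU_rival // EU_team_deviate_rival -/w; lra.
have [a01 a0] := rule_compl team_dec1 pi_ok.
have [b01 b0] := rule_compl team_dec2 pi_ok.
have [_ c0] := rule_compl rival_dec pi_ok.
have := pennies_bounds_absurd a01 b01 (team_best ord_max).
by rewrite -c0 -a0 -b0; apply; [apply: team_best | apply: rival_best | apply: rival_best].
Qed.

End TeamPennies.

(* [grp] matters only on decisions; the utility nodes are put anywhere. *)
Definition separate_grp (v : 'I_5) : 'I_3 :=
  match val v with 0 => ord0 | 1 => @Ordinal 3 1 isT | _ => ord_max end.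
Definition separate_owner (G : 'I_3) : 'I_2 := if G == ord_max then rival else team.
Definition separate_pennies := pennies separate_grp separate_owner.

Lemma separate_grp_onto (G : 'I_3) : exists2 v : 'I_5, (v < 3)%N & separate_grp v = G.
Proof.
by case: G => -[|[|[|]]] // G3; [exists team_dec1 | exists team_dec2 | exists rival_dec];
  rewrite //; apply: val_inj.
Qed.

Definition shared_grp (v : 'I_5) : 'I_2 := if (v < 2)%N then team else rival.
Definition shared_pennies := pennies shared_grp id.

Lemma shared_grp_onto (G : 'I_2) : exists2 v : 'I_5, (v < 3)%N & shared_grp v = G.
Proof. by case: (ord2P G) => ->; [exists team_dec1 | exists rival_dec]. Qed.

Theorem proposition1 :
  (exists M : MAID, [/\ wf_MAID M, (exists i : 'I_(nA M), forgetful i),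
                       (forall i : 'I_(nA M), ~ absent_minded i) &
                       ~ (exists pi : profile M, nash pi)]) /\
  (exists M : MAID, [/\ wf_MAID M, (exists i : 'I_(nA M), absent_minded i),
                       (forall i : 'I_(nA M), ~ forgetful i) &
                       ~ (exists pi : profile M, nash pi)]).
Proof.
split.
- exists separate_pennies; split.
  + exact: pennies_wf separate_grp_onto _.
  + exists team; apply: (@forgetful_of_unrelated separate_pennies team team_dec1 team_dec2);
      by rewrite //= /pennies_par inE.
  + move=> i; apply: not_absent_minded_of_grp_inj => v w.
    by case: (ord5P v) => [|[|[|[|]]]] ->; case: (ord5P w) => [|[|[|[|]]]] -> // _ _ /eqP.
  + exact: pennies_no_nash.
- exists shared_pennies; split.
  + exact: pennies_wf shared_grp_onto _.
  + by exists team, team_dec1, team_dec2.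
  + move=> i; apply: not_forgetful_of_one_group => v w.
    by case: (ord5P v) => [|[|[|[|]]]] ->; case: (ord5P w) => [|[|[|[|]]]] -> // /eqP <-.
  + exact: pennies_no_nash.
Qed.
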